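(* Let $h$ and $k$ be relatively prime odd integers with $k>0$. Then $$B_{1}(h,k)=\frac{h}{4k}\,Y(h,k)+\frac{1}{2k}-\frac{1}{2}.$$
   Context: $[x]$ denotes the greatest integer $\le x$, and $((x))=x-[x]-\tfrac12$ if $x\notin\mathbb{Z}$, $((x))=0$ if $x\in\mathbb{Z}$. For integers $h,k$ with $k>0$, $\gcd(h,k)=1$: $$B_{1}(h,k)=\sum_{j=1}^{k-1}(-1)^{j+\left[\frac{hj}{k}\right]}\left[\frac{hj}{k}\right],\qquad Y(h,k)=4k\sum_{j \bmod k}(-1)^{j+\left[\frac{hj}{k}\right]}\left(\left(\frac{j}{k}\right)\right),$$ the latter sum over a complete residue system modulo $k$ (the Simsek sum). *)

From mathcomp Require Import all_boot all_order all_algebra.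
Set Implicit Arguments. Unset Strict Implicit. Unset Printing Implicit Defensive.
Import Order.TTheory GRing.Theory Num.Theory.
Local Open Scope ring_scope.

Definition gint (x : rat) : int := Num.floor x.

Definition saw (x : rat) : rat :=
  if x \is a Num.int then 0 else x - (gint x)%:~R - 1 / 2.

Definition B1 (h k : int) : rat :=
  \sum_(1 <= j < `|k|%N)
     (-1) ^+ (j + `|gint ((h * j%:Z)%:~R / k%:~R)|%N)%N
       * (gint ((h * j%:Z)%:~R / k%:~R))%:~R.

Definition Y (h k : int) : rat :=
  4%:R * k%:~R *
  \sum_(0 <= j < `|k|%N)
     (-1) ^+ (j + `|gint ((h * j%:Z)%:~R / k%:~R)|%N)%N
       * saw (j%:R / k%:~R).

From mathcomp Require Import all_boot all_order all_algebra.
From mathcomp Require Import zify ring.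
Import Order.TTheory GRing.Theory Num.Theory.
Local Open Scope ring_scope.

(* Write h j = q_j k + r_j with 0 <= r_j < k.  As h and k are odd,
   (-1)^(j + q_j) = (-1)^(r_j), and h ((j/k)) = q_j + r_j/k - h/2 for 0 < j < k.
   Summing over j mod k, with a correction h/2 for ((0)) = 0, gives
   h Y/(4k) = B_1 + sum_j (-1)^(r_j) (r_j/k - h/2) + h/2.  Since j |-> r_j
   permutes the residues mod k, the middle sum is the alternating sum
   sum_(r < k) (-1)^r (r/k - h/2) = (k-1)/(2k) - h/2. *)

Lemma odd_halfE n : odd n -> n = (n./2).*2.+1.
Proof. by move=> n_odd; rewrite -[LHS]odd_double_half n_odd. Qed.

Lemma sum_sign_odd (R : comPzRingType) n : odd n -> \sum_(i < n) (-1) ^+ i = 1 :> R.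
Proof.
move=> /odd_halfE ->; elim: n./2 => [|m IH]; first by rewrite big_ord1.
rewrite doubleS (big_ord_recr m.*2.+2) (big_ord_recr m.*2.+1) /= IH !exprS.
ring.
Qed.

Lemma sum_sign_mul_odd (R : comPzRingType) n :
  odd n -> \sum_(i < n) (-1) ^+ i * i%:R = (n./2)%:R :> R.
Proof.
move=> /odd_halfE ->; rewrite /= uphalf_double.
elim: n./2 => [|m IH]; first by rewrite big_ord1 mulr0.
rewrite doubleS (big_ord_recr m.*2.+2) (big_ord_recr m.*2.+1) /= IH !exprS.
rewrite -signr_odd odd_double expr0 -[m.*2.+2]addn2 -[m.*2.+1]addn1 -[m.+1]addn1.
rewrite !natrD -mul2n natrM.
ring.
Qed.

Lemma floor_divz (R : archiRealFieldType) (a b : int) :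
  0 < b -> Num.floor (a%:~R / b%:~R : R) = (a %/ b)%Z.
Proof.
move=> b_gt0; apply: floor_def.
have b_gt0' : 0 < b%:~R :> R by rewrite ltr0z.
rewrite ler_pdivlMr // ltr_pdivrMr // -!intrM ler_int ltr_int.
have := divz_eq a b; have := modz_ge0 a (lt0r_neq0 b_gt0).
have := ltz_pmod a b_gt0; lia.
Qed.

Lemma saw_div_nat (j n : nat) : (j < n)%N ->
  saw (j%:R / n%:R) = j%:R / n%:R - 1 / 2 + (j == 0)%:R / 2.
Proof.
move=> lt_jn.
have fl0 : Num.floor (j%:R / n%:R : rat) = 0.
  by rewrite -[_ / _]/((j%:Z)%:~R / (n%:Z)%:~R) floor_divz ?divz_small //; lia.
rewrite /saw /gint intrEfloor fl0.
case: (posnP j) => [-> | j_gt0]; first by rewrite mul0r eqxx.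
have -> : (0%:~R == j%:R / n%:R :> rat) = false.
  by apply/negbTE; rewrite eq_sym mulf_neq0 ?invr_eq0 ?pnatr_eq0 //; lia.
by rewrite subr0 mul0r addr0.
Qed.

Lemma oddzE (x : int) : ~~ (2 %| x)%Z -> x = (x %/ 2)%Z * 2 + 1.
Proof.
move=> x_odd; rewrite {1}(divz_eq x 2); congr (_ + _).
have := modz_ge0 x (isT : 2 != 0 :> int); have := ltz_pmod x (isT : 0 < 2 :> int).
by move: x_odd; rewrite dvdzE; lia.
Qed.

Lemma sign_parity_divz (R : pzRingType) (h n : int) (j : nat) :
  ~~ (2 %| h)%Z -> ~~ (2 %| n)%Z ->
  (-1) ^+ (j + `|((h * j%:Z) %/ n)%Z|)%N = (-1) ^+ `|((h * j%:Z) %% n)%Z|%N :> R.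
Proof.
move=> /oddzE h_odd /oddzE n_odd; rewrite -signr_odd -[RHS]signr_odd.
congr (_ ^+ _).
suff: (odd (j + `|((h * j%:Z) %/ n)%Z|) : nat) = odd `|((h * j%:Z) %% n)%Z|.
  by do 2 case: odd.
have := divz_eq (h * j%:Z) n.
set q := ((h * j%:Z) %/ n)%Z; set r := ((h * j%:Z) %% n)%Z.
set a := (h %/ 2)%Z; set b := (n %/ 2)%Z; rewrite h_odd n_odd => hjE.
have jE : j%:Z = q + r + 2 * (q * b - a * j%:Z).
  by move: hjE; lia.
rewrite -!modn2; lia.
Qed.

Lemma reindex_mulz_mod (R : nmodType) (h : int) (n : nat) (F : nat -> R) :
  coprimez h n -> \sum_(j < n) F `|((h * j%:Z) %% n)%Z|%N = \sum_(j < n) F j.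
Proof.
move=> cop_hn.
have n_gt0 (j : 'I_n) : (0 < n)%N by apply: leq_ltn_trans (ltn_ord j).
have lt_res (j : 'I_n) : (`|((h * j%:Z) %% n)%Z| < n)%N.
  have := modz_ge0 (h * j%:Z) (_ : n%:Z != 0); have := ltz_pmod (h * j%:Z) (_ : 0 < n%:Z).
  have := n_gt0 j; lia.
pose res (j : 'I_n) : 'I_n := Ordinal (lt_res j).
have res_inj : injective res.
  move=> i j /(congr1 val) /= eq_res; apply: val_inj => /=.
  have : (n %| h * (i%:Z - j%:Z))%Z.
    rewrite mulrBr -eqz_mod_dvd; apply/eqP.
    have := modz_ge0 (h * i%:Z) (_ : n%:Z != 0); have := modz_ge0 (h * j%:Z) (_ : n%:Z != 0).
    have := n_gt0 j; lia.
  rewrite Gauss_dvdzr; last by rewrite coprimez_sym.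
  case/dvdzP=> c ijE; have := ltn_ord i; have := ltn_ord j.
  have [c0 | c_neq0] := eqVneq c 0; first by rewrite c0 mul0r in ijE; lia.
  nia.
by rewrite [RHS](reindex_inj res_inj).
Qed.

Section SimsekSum.

Variables (h : int) (n : nat).
Hypotheses (h_odd : ~~ (2 %| h)%Z) (n_odd : ~~ (2 %| n%:Z)%Z).

Let odd_n : odd n.
Proof. by move: n_odd; rewrite unfold_in /= dvdn2 negbK. Qed.

Let n_gt0 : (0 < n)%N.
Proof. by case: n odd_n. Qed.

Let n_neq0 : n%:R != 0 :> rat.
Proof. by rewrite pnatr_eq0 -lt0n. Qed.

Let quo (j : nat) : int := gint ((h * j%:Z)%:~R / (n%:Z)%:~R).
Let res (j : nat) : int := ((h * j%:Z) %% n%:Z)%Z.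
Let sign (j : nat) : rat := (-1) ^+ (j + `|quo j|)%N.
Let res_term (x : nat) : rat := (-1) ^+ x * (x%:R / n%:R - h%:~R / 2).

Lemma quo_res_divz (j : nat) : h * j%:Z = quo j * n%:Z + res j.
Proof. by rewrite /quo /gint floor_divz ?ltz_nat // -divz_eq. Qed.

Lemma hmul_sign_saw (j : nat) : (j < n)%N ->
  h%:~R * (sign j * saw (j%:R / (n%:Z)%:~R)) =
  sign j * (quo j)%:~R + res_term `|res j|%N + (j == 0)%:R * (h%:~R / 2).
Proof.
move=> lt_jn; rewrite saw_div_nat // /res_term.
have -> : (-1) ^+ `|res j|%N = sign j.
  by rewrite /sign /quo /gint floor_divz ?ltz_nat // sign_parity_divz.
have -> : (`|res j|%N)%:R = (res j)%:~R :> rat.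
  by rewrite natr_absz ger0_norm // modz_ge0 //; lia.
have hjE : h%:~R * j%:R = (quo j)%:~R * n%:R + (res j)%:~R :> rat.
  by rewrite -[j%:R]/((j%:Z)%:~R) -[n%:R]/((n%:Z)%:~R) -!intrM -intrD -quo_res_divz.
case: (posnP j) => [-> | j_gt0].
  rewrite /sign /quo /res !mulr0 mul0r mod0z /gint floor0 /=.
  by rewrite expr0 mul0r; ring.
rewrite !mul0r !addr0.
have -> : h%:~R * (sign j * (j%:R / n%:R - 1 / 2)) =
          sign j * (h%:~R * j%:R) / n%:R - sign j * (h%:~R / 2) by ring.
by rewrite hjE; field.
Qed.

Lemma sum_res_term : \sum_(j < n) res_term j = (n./2)%:R / n%:R - h%:~R / 2.
Proof.
have splitE x : res_term x = (-1) ^+ x * x%:R / n%:R - h%:~R / 2 * (-1) ^+ x.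
  by rewrite /res_term; ring.
under eq_bigr => x _ do rewrite splitE.
rewrite sumrB -mulr_suml -mulr_sumr.
by rewrite sum_sign_odd // sum_sign_mul_odd // mulr1.
Qed.

Lemma B1_Y_nat : coprimez h n ->
  B1 h n = h%:~R / (4%:R * (n%:Z)%:~R) * Y h n + 1 / (2%:R * (n%:Z)%:~R) - 1 / 2%:R.
Proof.
move=> cop_hn; rewrite /B1 /Y /=.
have n4_neq0 : 4%:R * (n%:Z)%:~R != 0 :> rat by rewrite mulf_neq0.
have B1E : \sum_(1 <= j < n) sign j * (quo j)%:~R = \sum_(0 <= j < n) sign j * (quo j)%:~R.
  by rewrite (big_ltn n_gt0) /quo /gint mulr0 mul0r floor0 mulr0 add0r.
rewrite mulrA divfK // B1E !big_mkord mulr_sumr.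
rewrite [in RHS](eq_bigr _ (fun j _ => hmul_sign_saw _ (ltn_ord j))).
rewrite !big_split /= reindex_mulz_mod // sum_res_term.
have deltaE : \sum_(i < n) ((i : nat) == 0)%:R * (h%:~R / 2) = h%:~R / 2 :> rat.
  rewrite -(big_mkord xpredT (fun i => (i == 0)%:R * (h%:~R / 2))) (big_ltn n_gt0) mul1r.
  by rewrite big_nat big1 ?addr0 // => i /andP[i_gt0 _]; rewrite gtn_eqF // mul0r.
have nE : n%:R = 2 * (n./2)%:R + 1 :> rat.
  by rewrite {1}(odd_halfE _ odd_n) -addn1 -mul2n natrD natrM.
rewrite deltaE -[(n%:Z)%:~R]/(n%:R : rat) nE.
by field; rewrite -nE.
Qed.

End SimsekSum.

Theorem theorem13 (h k : int) :
  (0 < k)%R -> ~~ (2 %| h)%Z -> ~~ (2 %| k)%Z -> coprimez h k ->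
  B1 h k = h%:~R / (4%:R * k%:~R) * Y h k + 1 / (2%:R * k%:~R) - 1 / 2%:R.
Proof. by case: k => // n _; exact: B1_Y_nat. Qed.
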